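(* Let $(X,d)$ be a separable complete metric space, $(\Omega,\mathsf{F},\mathbb{P})$ a probability space, and $\mathcal{F}$ a sub-$\sigma$-algebra of $\mathsf{F}$. Let $\phi:X\times X\to[0,\infty)$ be a Carath\'eodory distance and let $S\subseteq X$ be a non-empty Borel set. Then for every $\mathcal{F}$-measurable $X$-valued random variable $x$ and every $\varepsilon>0$ there exists an $\mathcal{F}$-measurable $X$-valued random variable $s$ such that almost surely $s\in S$ and $\phi(s,x)\le\mathrm{dist}^\phi_S(x)+\varepsilon$.
   Context: A Carath\'eodory distance is a function $\phi:X\times X\to[0,\infty)$ continuous in its left argument and Borel measurable in its right argument. $\mathrm{dist}^\phi_S(x):=\inf_{s\in S}\phi(s,x)$. No completeness of $(\Omega,\mathcal{F},\mathbb{P})$ is assumed. *)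

From HB Require Import structures.
From mathcomp Require Import all_boot all_order all_algebra.
From mathcomp Require Import all_classical all_reals all_analysis.
Set Implicit Arguments. Unset Strict Implicit. Unset Printing Implicit Defensive.
Import Order.TTheory GRing.Theory Num.Theory.
Import numFieldNormedType.Exports.
Local Open Scope classical_set_scope.
Local Open Scope ring_scope.

Definition borel (X : topologicalType) : set (set X) := <<s @open X >>.

Definition separable_space (X : topologicalType) : Prop :=
  exists2 D : set X, countable D & dense D.

Definition meas_wrt (Omega : Type) (X : topologicalType) (G : set (set Omega))
  (f : Omega -> X) : Prop :=
  forall B : set X, borel B -> G (f @^-1` B).

Definition caratheodory_distance (R : realType) (X : topologicalType)
  (phi : X -> X -> R) : Prop :=
  [/\ forall a b, 0 <= phi a b,
      forall y, continuous (fun s => phi s y) &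
      forall s (B : set R), measurable B -> borel ((fun x => phi s x) @^-1` B)].

Definition distphi (R : realType) (X : Type) (phi : X -> X -> R) (S : set X)
  (x : X) : R := inf [set phi s x | s in S].

From HB Require Import structures.
From mathcomp Require Import all_boot all_order all_algebra.
From mathcomp Require Import all_classical all_reals all_analysis.
From mathcomp Require Import measurable_realfun lra.
Import Order.TTheory GRing.Theory Num.Theory.
Import numFieldNormedType.Exports.
Local Open Scope classical_set_scope.
Local Open Scope ring_scope.

(* Separability yields a sequence (e n) in S that is dense in S; by continuity
   of phi in its left argument, dist^phi_S(y) is the infimum of the sequence
   phi(e n, y).  For each w take the least index n whose term is within eps of
   every other term at y = x w: it is eps-close to that infimum, and the
   events "n is such an index" are F-measurable, so s := e_n is F-measurable
   as a countably-valued first-hit selection. *)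

Lemma separable_dense_seq {X : topologicalType} (x0 : X) :
  separable_space X -> exists f : nat -> X, dense (range f).
Proof.
move=> [D cD dD]; have [D0|[f]] := pfcard_geP cD.
  by have [y []] := dD setT (ex_intro _ x0 I) openT; rewrite D0.
exists f; suff -> : range f = D by [].
by apply/seteqP; split=> [_ [n _ <-]|]; [exact: funS | exact: 'surj_f].
Qed.

Lemma separable_subset_dense_seq {R : realType} {X : pseudoMetricType R}
    (S : set X) (s0 : X) :
  S s0 -> separable_space X ->
  exists2 e : nat -> X, (forall n, S (e n)) & S `<=` closure (range e).
Proof.
move=> Ss0 /(separable_dense_seq s0)[f df].
pose g i k := xget s0 (S `&` ball (f i) k.+1%:R^-1).
have Sg i k : S (g i k) by rewrite /g; case: xgetP => [y -> []|].
pose e n := if (unpickle n : option (nat * nat)) is Some (i, k) then g i k else s0.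
exists e; first by move=> n; rewrite /e; case: unpickle => [[i k]|].
move=> s Ss B /nbhs_ballP[_/posnumP[r] rB].
have [k _ /(_ k (leqnn k)) kr] := near_infty_natSinv_lt (PosNum [gt0 of r%:num / 2]).
pose a : R := k.+1%:R^-1.
have a_gt0 : 0 < a by rewrite invr_gt0 ltr0n.
have [oO Os] := open_nbhs_ball s (PosNum a_gt0).
have [z [/interior_subset sz [i _ fiz]]] := df _ (ex_intro _ s Os) oO.
rewrite -fiz in sz.
have [_ fig] : (S `&` ball (f i) a) (g i k).
  by apply: xgetI; split; [exact: Ss | exact: ball_sym].
exists (e (pickle (i, k))); split; first by exists (pickle (i, k)).
apply: rB; rewrite /e pickleK /=.
have aar : a + a <= r%:num by rewrite [leRHS]splitr ltW ?ltrD.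
exact: le_ball aar _ (ball_triangle sz fig).
Qed.

Section inf_seq.
Context {R : realType}.

Lemma inf_image_closure_range {T : topologicalType} (f : T -> R) (S : set T)
    (e : nat -> T) :
  continuous f -> has_lbound (f @` S) ->
  (forall n, S (e n)) -> S `<=` closure (range e) ->
  inf (f @` S) = inf (range (f \o e)).
Proof.
move=> fc lbS eS Se; have lbe : has_lbound (range (f \o e)).
  by case: lbS => l lbl; exists l => _ [n _ <-]; apply: lbl; exists (e n).
apply/eqP; rewrite eq_le; apply/andP; split.
  apply: lb_le_inf; first by exists (f (e 0)), 0%N.
  by move=> _ [n _ <-]; apply: ge_inf => //; exists (e n).
apply: lb_le_inf; first by exists (f (e 0)), (e 0).
move=> _ [s Ss <-]; apply/ler_addgt0Pr => delta delta_gt0.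
have [_ [[n _ <-] /= fen]] :=
  Se s Ss _ (fc s _ (nbhs_ball_norm _ (PosNum delta_gt0))).
apply: le_trans (ge_inf lbe _) _; first by exists n.
by move: fen; rewrite ltr_norml => /andP[fen _] /=; lra.
Qed.

Definition near_min (a : nat -> R) (eps : R) (n : nat) :=
  forall m, a n - a m < eps.

Lemma near_min_exists (a : nat -> R) (eps : R) :
  has_lbound (range a) -> 0 < eps -> exists n, near_min a eps n.
Proof.
move=> lba eps_gt0; have infa : has_inf (range a) by split => //; exists (a 0%N), 0%N.
have [_ [n _ <-] an] := inf_adherent eps_gt0 infa.
exists n => m; have : inf (range a) <= a m by apply: ge_inf => //; exists m.
lra.
Qed.

Lemma near_min_le_inf (a : nat -> R) (eps : R) (n : nat) :
  near_min a eps n -> a n <= inf (range a) + eps.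
Proof.
move=> an; rewrite -lerBlDr; apply: lb_le_inf; first by exists (a 0%N), 0%N.
by move=> _ [m _ <-]; have := an m; lra.
Qed.

End inf_seq.

Section first_hit.
Context {d : measure_display} {T : measurableType d}.

Lemma measurable_first_hit (C : nat -> set T) :
  (forall n, measurable (C n)) -> (forall w, exists n, C n w) ->
  exists2 N : T -> nat,
    (forall w, C (N w) w) & forall n, measurable (N @^-1` [set n]).
Proof.
move=> mC hC; have hCb w : exists n, `[< C n w >].
  by have [n Cn] := hC w; exists n; apply/asboolP.
exists (fun w => ex_minn (hCb w)); first by move=> w; case: ex_minnP => n /asboolP.
move=> n; suff -> : (fun w => ex_minn (hCb w)) @^-1` [set n] =
    C n `\` \bigcup_(k in `I_n) C k.
  by apply: measurableD => //; apply: bigcup_measurable.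
apply/seteqP; split => w /=; case: ex_minnP => m /asboolP Cm minm.
  by move=> <-; split => // -[k /= km /asboolT/minm]; rewrite leqNgt km.
move=> [Cn nC]; apply/eqP; rewrite eqn_leq minm ?asboolT //= leqNgt.
by apply/negP => mn; apply: nC; exists m.
Qed.

Lemma measurable_preimage_comp_nat {U : Type} (N : T -> nat) (e : nat -> U) :
  (forall n, measurable (N @^-1` [set n])) ->
  forall B : set U, measurable ((e \o N) @^-1` B).
Proof.
move=> mN B; suff -> : (e \o N) @^-1` B = \bigcup_(n in e @^-1` B) N @^-1` [set n].
  exact: bigcup_measurable.
by apply/seteqP; split => [w Bw|w [n Bn /= ->]] //; exists (N w).
Qed.

Lemma measurable_near_min {R : realType} (a : nat -> T -> R) (eps : R) (n : nat) :
  (forall m, measurable_fun setT (a m)) ->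
  measurable [set w | near_min (a ^~ w) eps n].
Proof.
move=> ma; suff -> : [set w | near_min (a ^~ w) eps n] =
    \bigcap_m ((a n \- a m) @^-1` `]-oo, eps[).
  apply: bigcapT_measurable => m; rewrite -[_ @^-1` _]setTI.
  exact: measurable_funB (ma n) (ma m) measurableT _ (measurable_itv _).
apply/seteqP; split => w /= anw m; last by have := anw m I; rewrite /= in_itv.
by move=> _; rewrite /= in_itv /= anw.
Qed.

End first_hit.

Theorem lemma2p10 (R : realType) (X : completePseudoMetricType R)
  (d : measure_display) (Omega : measurableType d) (P : probability Omega R)
  (F : set (set Omega)) (phi : X -> X -> R) (S : set X) :
  hausdorff_space X -> separable_space X ->
  sigma_algebra setT F -> F `<=` measurable ->
  caratheodory_distance phi ->
  borel S -> S !=set0 ->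
  forall (x : Omega -> X), meas_wrt F x ->
  forall eps : R, 0 < eps ->
  exists s : Omega -> X, meas_wrt F s /\
    {ae P, forall w, S (s w) /\ phi (s w) (x w) <= distphi phi S (x w) + eps}.
Proof.
move=> _ sep sF _ [phi_ge0 phi_cont phi_meas] _ [s0 Ss0] x mx eps eps_gt0.
have [e eS Se] := separable_subset_dense_seq _ _ Ss0 sep.
pose a n (w : g_sigma_algebraType F) := phi (e n) (x w).
have ma n : measurable_fun setT (a n).
  move=> _ B mB; rewrite setTI; apply: sub_sigma_algebra.
  exact: mx (phi_meas _ _ mB).
have lba w : has_lbound (range (a ^~ w)).
  by exists 0 => _ [n _ <-]; exact: phi_ge0.
have distE w : distphi phi S (x w) = inf (range (a ^~ w)).
  rewrite /distphi (inf_image_closure_range _ _ _ (phi_cont (x w)) _ eS Se) //.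
  by exists 0 => _ [s _ <-]; exact: phi_ge0.
have [N aN mN] := measurable_first_hit _ (fun n => measurable_near_min a eps n ma)
  (fun w => near_min_exists _ _ (lba w) eps_gt0).
exists (e \o N); split.
  move=> B _; rewrite -(measurable_g_measurableTypeE sF).
  exact: measurable_preimage_comp_nat.
apply: aeW => w; split; first exact: eS.
by rewrite distE; exact: near_min_le_inf (a ^~ w) eps (N w) (aN w).
Qed.
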